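(* Consider $\min_{x\in X}f(x)$, $f(x)=\mathbb{E}[F(x,\xi)]$, with $F:\mathcal{D}\times\Omega\to\mathbb{R}$, $\mathcal{D}\subseteq\mathbb{R}^n$ open, $X\subset\mathcal{D}$ nonempty closed convex, $F(\cdot,\xi)$ convex on $\mathcal{D}$ for all $\xi$, $\mathbb{E}[F(x,\xi)]$ finite on $\mathcal{D}$. Let $f$ be differentiable over $X$ with $L$-Lipschitz gradient and strongly convex with constant $\eta>0$, let $X$ be compact and $D=\max_{x,y\in X}\|x-y\|$, and assume $\mathbb{E}[\|w_k\|^2\mid\mathcal{F}_k]\le\nu^2$ a.s. for all $k$. Then in the cascading steplength scheme (defined in the context), $K_t$ is finite for all $t\ge0$.
   Context: Iteration: $x_{k+1}=\Pi_X(x_k-\gamma_k(\nabla f(x_k)+w_k))$, $w_k=\nabla_xF(x_k,\xi_k)-\nabla f(x_k)$, $x_0\in X$ random, $\mathcal{F}_k=\{x_0,\xi_0,\dots,\xi_{k-1}\}$, $\mathbb{E}[w_k\mid\mathcal{F}_k]=0$. Cascading steplength scheme: let $q(\gamma)=1-\eta\gamma(2-L\gamma)$, $\theta\in(0,1)$, and an initial $\gamma\in(0,\frac2L)$. Initialization: let $\ell=\min\{j: D^2>\frac{\gamma^2\theta^{2j}\nu^2}{1-q(\gamma\theta^j)}\}$, $\gamma_0=\gamma\theta^\ell$, $q_0=q(\gamma_0)$, $K_0=\max\{k\in\mathbb{Z}_+: q_0^kD^2>\frac{\gamma_0^2\nu^2}{1-q_0}\}$, $\bar K_{-1}=0$.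 For $t\ge1$: $\gamma_t=\theta\gamma_{t-1}$, $q_t=q(\gamma_t)$, and $K_t=\max\{k\in\mathbb{Z}_+: q_t^k\,2^t\big(\prod_{j=0}^{t-1}q_j^{K_j}\big)D^2>\frac{\gamma_t^2\nu^2}{1-q_t}\}$. With $\bar K_t=\sum_{j=0}^tK_j$, the stepsize is $\gamma_k=\gamma_t$ for $k=\bar K_{t-1}+1,\dots,\bar K_t$. *)

From HB Require Import structures.
From mathcomp Require Import all_boot all_order all_algebra.
From mathcomp Require Import all_classical all_reals all_analysis.
Set Implicit Arguments. Unset Strict Implicit. Unset Printing Implicit Defensive.
Import Order.TTheory GRing.Theory Num.Theory.
Import numFieldNormedType.Exports.
Local Open Scope classical_set_scope.
Local Open Scope ring_scope.

Definition dotv {R : realType} {n : nat} (u v : 'rV[R]_n) : R :=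
  \sum_(i < n) u 0 i * v 0 i.
Definition enorm {R : realType} {n : nat} (u : 'rV[R]_n) : R :=
  Num.sqrt (dotv u u).

Definition convex_setv {R : realType} {n : nat} (X : set 'rV[R]_n) : Prop :=
  forall x y (lam : R), X x -> X y -> 0 <= lam -> lam <= 1 ->
    X (lam *: x + (1 - lam) *: y).

Definition strongly_convex_on {R : realType} {n : nat}
    (X : set 'rV[R]_n) (f : 'rV[R]_n -> R) (eta : R) : Prop :=
  forall x y (lam : R), X x -> X y -> 0 <= lam -> lam <= 1 ->
    f (lam *: x + (1 - lam) *: y) <=
      lam * f x + (1 - lam) * f y - eta / 2 * lam * (1 - lam) * enorm (x - y) ^+ 2.

Definition qfun {R : realType} (eta L g : R) : R := 1 - eta * g * (2 - L * g).

Definition ell_cond {R : realType} (eta L nu D gamma theta : R) (j : nat) : Prop :=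
  gamma ^+ 2 * theta ^+ (2 * j) * nu ^+ 2 / (1 - qfun eta L (gamma * theta ^+ j))
    < D ^+ 2.

(* For t = 0 (2^0 = 1, empty product) this is exactly the condition defining K_0. *)
Definition K_cond {R : realType} (eta L nu D gamma0 theta : R) (K : nat -> nat)
    (t k : nat) : Prop :=
  let gt := gamma0 * theta ^+ t in
  let qt := qfun eta L gt in
  gt ^+ 2 * nu ^+ 2 / (1 - qt) <
    qt ^+ k * 2%:R ^+ t *
      (\prod_(j < t) qfun eta L (gamma0 * theta ^+ j) ^+ K j) * D ^+ 2.

Definition is_min_nat (P : nat -> Prop) (m : nat) : Prop :=
  P m /\ forall j, P j -> (m <= j)%N.
Definition is_max_nat (P : nat -> Prop) (m : nat) : Prop :=
  P m /\ forall k, P k -> (k <= m)%N.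

From HB Require Import structures.
From mathcomp Require Import all_boot all_order all_algebra.
From mathcomp Require Import all_classical all_reals all_analysis.
From mathcomp Require Import ring lra.
Set Implicit Arguments. Unset Strict Implicit. Unset Printing Implicit Defensive.
Import Order.TTheory GRing.Theory Num.Theory.
Import numFieldNormedType.Exports.
Local Open Scope classical_set_scope.
Local Open Scope ring_scope.

(* Write A(g) = g^2 nu^2 / (1 - q(g)) = g nu^2 / (eta (2 - L g)).  Strong convexity together
   with the Lipschitz gradient forces eta <= L, so 0 <= q(g) < 1 for every g in (0, 2/L), and
   A(theta g) <= theta A(g).  Hence A(gamma theta^j) -> 0, which gives ell, and for each t the
   right side q_t^k C_t of the condition defining K_t tends to 0 in k, so the set of admissible
   k is bounded.  It is nonempty: k = 0 satisfies the condition at t = 0 by the choice of ell,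
   and at t + 1 because the factor 2 in 2^(t+1) and A(gamma_(t+1)) <= A(gamma_t) turn the
   condition satisfied by K_t into the one required of 0.  Since K_t depends on K_0, ..., K_(t-1),
   the sequence is built by course-of-values recursion. *)

Lemma is_min_nat_exists (P : nat -> Prop) : (exists j, P j) -> exists m, is_min_nat P m.
Proof.
move=> [j Pj].
have exP : exists i, `[< P i >] by exists j; apply/asboolP.
by case: (ex_minnP exP) => m /asboolP Pm minm; exists m; split=> // k /asboolP /minm.
Qed.

Lemma is_max_nat_exists (P : nat -> Prop) :
  (exists k, P k) -> (exists M, forall k, P k -> (k <= M)%N) -> exists m, is_max_nat P m.
Proof.
move=> [j Pj] [M boundM].
have exP : exists i, `[< P i >] by exists j; apply/asboolP.
have ubP i : `[< P i >] -> (i <= M)%N by move/asboolP/boundM.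
by case: (ex_maxnP exP ubP) => m /asboolP Pm maxm; exists m; split=> // k /asboolP /maxm.
Qed.

Section RecursiveMax.

Variable c : (nat -> nat) -> nat -> nat -> Prop.
Hypothesis c_ext : forall K1 K2 t,
  (forall j, (j < t)%N -> K1 j = K2 j) -> c K1 t = c K2 t.
Hypothesis c_max : forall K t,
  (forall j, (j < t)%N -> is_max_nat (c K j) (K j)) -> exists m, is_max_nat (c K t) m.

Fixpoint max_prefix (t : nat) : seq nat :=
  if t is s.+1 then
    rcons (max_prefix s) (xget 0%N (is_max_nat (c (nth 0%N (max_prefix s)) s)))
  else [::].

Let Kmax t := nth 0%N (max_prefix t.+1) t.

Lemma size_max_prefix t : size (max_prefix t) = t.
Proof. by elim: t => //= t IH; rewrite size_rcons IH. Qed.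

Lemma nth_max_prefix t j : (j < t)%N -> nth 0%N (max_prefix t) j = Kmax j.
Proof.
elim: t => // t IH; rewrite ltnS leq_eqVlt => /predU1P[->//|jt].
by rewrite /= nth_rcons size_max_prefix jt IH.
Qed.

Lemma Kmax_xget t : Kmax t = xget 0%N (is_max_nat (c Kmax t)).
Proof.
rewrite /Kmax /= nth_rcons size_max_prefix ltnn eqxx.
by rewrite (@c_ext _ Kmax) // => j /nth_max_prefix.
Qed.

Lemma exists_recursive_max : exists K, forall t, is_max_nat (c K t) (K t).
Proof.
exists Kmax; elim/ltn_ind => t IH.
by rewrite Kmax_xget; apply: xgetPex; apply: c_max.
Qed.

End RecursiveMax.

Lemma geometric_eventually_lt (R : realType) (q C e : R) :
  `|q| < 1 -> 0 < e -> exists N, forall k, (N <= k)%N -> q ^+ k * C < e.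
Proof.
move=> q_lt1 e_gt0.
have qkC : (fun k => q ^+ k * C) @ \oo --> 0 * C.
  by apply: cvgM; [exact: cvg_expr | exact: cvg_cst].
rewrite mul0r in qkC.
by case: (cvgr_lt _ qkC _ e_gt0) => N _ qkC_lt; exists N => k Nk; apply: qkC_lt.
Qed.

Lemma diff_le_of_secant_bound (R : realType) (V : normedModType R) (f : V -> R)
    (x v : V) (a b : R) :
  differentiable f x ->
  (forall t, 0 < t -> t <= 1 -> t^-1 * (f (t *: v + x) - f x) <= a + b * t) ->
  'd f x v <= a.
Proof.
move=> df secant_le.
rewrite -deriveE //.
have dq : (fun t : R => t^-1 *: (f (t *: v + x) - f x)) @ 0^'+ --> 'D_v f x.
  apply: cvg_trans (diff_derivable (v := v) df); apply: cvg_app.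
  by apply: within_subset => t /= /gt_eqF ->.
have lin : (fun t : R => a + b * t) @ 0^'+ --> a + b * 0.
  apply: cvg_at_right_filter; apply: cvgD; first exact: cvg_cst.
  by apply: cvgM; [exact: cvg_cst | exact: cvg_id].
rewrite mulr0 addr0 in lin.
apply: (ler_cvg_to dq lin); near=> t; apply: secant_le.
- by near: t; exact: nbhs_right_gt.
- by near: t; apply: nbhs_right_le; exact: ltr01.
Unshelve. all: by end_near. Qed.

Section EuclideanNorm.

Variables (R : realType) (n : nat).
Implicit Types u v : 'rV[R]_n.

Lemma dotv_self_ge0 u : 0 <= dotv u u.
Proof. by apply: sumr_ge0 => i _; rewrite -expr2 sqr_ge0. Qed.

Lemma enorm_sqr u : enorm u ^+ 2 = dotv u u.
Proof. exact/sqr_sqrtr/dotv_self_ge0. Qed.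

Lemma enormN u : enorm (- u) = enorm u.
Proof. by rewrite /enorm /dotv; congr Num.sqrt; apply: eq_bigr => i _; rewrite !mxE mulrNN. Qed.

Lemma enormB_sym u v : enorm (u - v) = enorm (v - u).
Proof. by rewrite -opprB enormN. Qed.

Lemma enorm_ge0 u : 0 <= enorm u.
Proof. exact: sqrtr_ge0. Qed.

Lemma dotv_le_of_enorm_le u v (L : R) :
  0 < L -> enorm u <= L * enorm v -> dotv u v <= L * enorm v ^+ 2.
Proof.
move=> L_gt0 uv.
have expand : dotv (u - L *: v) (u - L *: v) =
    dotv u u - 2 * L * dotv u v + L ^+ 2 * dotv v v.
  rewrite /dotv !mulr_sumr -sumrB -big_split /=.
  by apply: eq_bigr => i _; rewrite !mxE; ring.
have := dotv_self_ge0 (u - L *: v); rewrite expand -!enorm_sqr.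
have : enorm u ^+ 2 <= (L * enorm v) ^+ 2.
  by rewrite lerXn2r ?nnegrE ?mulr_ge0 ?enorm_ge0 ?(ltW L_gt0).
rewrite exprMn => uv2 expand_ge0.
by rewrite -(ler_pM2l L_gt0); lra.
Qed.

End EuclideanNorm.

Section StronglyConvex.

Variables (R : realType) (n : nat) (X : set 'rV[R]_n).
Variables (f : 'rV[R]_n -> R) (gradf : 'rV[R]_n -> 'rV[R]_n) (eta : R).
Hypothesis f_grad : forall x, X x ->
  differentiable f x /\ forall h, 'd f x h = dotv (gradf x) h.
Hypothesis f_strong : strongly_convex_on X f eta.

Lemma strongly_convex_gradient_le x y : X x -> X y ->
  dotv (gradf x) (y - x) <= f y - f x - eta / 2 * enorm (y - x) ^+ 2.
Proof.
move=> Xx Xy; have [dfx dfxE] := f_grad Xx.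
rewrite -dfxE.
apply: (@diff_le_of_secant_bound _ _ _ _ _ _ (eta / 2 * enorm (y - x) ^+ 2)) => // t t_gt0 t_le1.
have := f_strong Xy Xx (ltW t_gt0) t_le1.
have -> : t *: (y - x) + x = t *: y + (1 - t) *: x.
  by rewrite scalerBr scalerBl scale1r addrA addrAC.
move=> conv; rewrite mulrC ler_pdivrMr //; nra.
Qed.

Lemma strongly_convex_gradient_monotone x y : X x -> X y ->
  eta * enorm (x - y) ^+ 2 <= dotv (gradf x - gradf y) (x - y).
Proof.
move=> Xx Xy.
have := strongly_convex_gradient_le Xx Xy.
have := strongly_convex_gradient_le Xy Xx.
have -> : dotv (gradf x - gradf y) (x - y) =
    - (dotv (gradf x) (y - x) + dotv (gradf y) (x - y)).
  rewrite /dotv -big_split -sumrN /=; apply: eq_bigr => i _; rewrite !mxE; ring.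
rewrite [enorm (y - x)]enormB_sym; lra.
Qed.

Lemma strong_convexity_le_lipschitz (L : R) x y :
  (forall x y, X x -> X y -> enorm (gradf x - gradf y) <= L * enorm (x - y)) ->
  0 < L -> X x -> X y -> 0 < enorm (x - y) -> eta <= L.
Proof.
move=> gradf_lip L_gt0 Xx Xy xy_gt0.
have := le_trans (strongly_convex_gradient_monotone Xx Xy)
  (dotv_le_of_enorm_le L_gt0 (gradf_lip x y Xx Xy)).
by rewrite ler_pM2r // exprn_gt0.
Qed.

End StronglyConvex.

Definition admissible_step (R : realType) (L g : R) := 0 < g /\ L * g < 2.

Lemma admissible_step_scale (R : realType) (L g th : R) :
  0 <= L -> admissible_step L g -> 0 < th -> th <= 1 -> admissible_step L (th * g).
Proof.
move=> L_ge0 [g_gt0 Lg_lt2] th_gt0 th_le1; split; first exact: mulr_gt0.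
by apply: le_lt_trans Lg_lt2; rewrite mulrCA ler_piMl // mulr_ge0 // ltW.
Qed.

Section ErrorFloor.

Variables (R : realType) (eta L nu : R).
Hypotheses (eta_gt0 : 0 < eta) (eta_le_L : eta <= L).

Definition error_floor (g : R) := g ^+ 2 * nu ^+ 2 / (1 - qfun eta L g).

Lemma qfun_complement g : 1 - qfun eta L g = eta * g * (2 - L * g).
Proof. by rewrite /qfun; ring. Qed.

(* q(g) - (1 - eta g)^2 = eta g^2 (L - eta). *)
Lemma qfun_ge0 g : 0 <= qfun eta L g.
Proof.
have gap : 0 <= eta * g ^+ 2 * (L - eta).
  by rewrite mulr_ge0 ?subr_ge0 // mulr_ge0 ?sqr_ge0 // ltW.
have := sqr_ge0 (1 - eta * g); rewrite /qfun; nra.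
Qed.

Lemma qfun_lt1 g : admissible_step L g -> qfun eta L g < 1.
Proof.
by move=> [g_gt0 Lg_lt2]; rewrite -subr_gt0 qfun_complement !mulr_gt0 // subr_gt0.
Qed.

Lemma error_floor_gt0 g : 0 < nu -> admissible_step L g -> 0 < error_floor g.
Proof.
move=> nu_gt0 g_adm; have [g_gt0 _] := g_adm.
by rewrite divr_gt0 ?mulr_gt0 ?exprn_gt0 // subr_gt0 qfun_lt1.
Qed.

Lemma error_floor_scale th g : admissible_step L g -> 0 < th -> th <= 1 ->
  error_floor (th * g) <= th * error_floor g.
Proof.
move=> g_adm th_gt0 th_le1.
have L_ge0 : 0 <= L by apply: le_trans eta_le_L; exact: ltW.
have [thg_gt0 Lthg_lt2] := admissible_step_scale L_ge0 g_adm th_gt0 th_le1.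
have [g_gt0 Lg_lt2] := g_adm.
have floorE h : 0 < h -> L * h < 2 -> error_floor h = h * nu ^+ 2 / (eta * (2 - L * h)).
  by move=> h_gt0 Lh_lt2; rewrite /error_floor qfun_complement; field;
    rewrite !gt_eqF // subr_gt0.
rewrite !floorE // mulrA ler_pdivrMr ?mulr_gt0 ?subr_gt0 //.
rewrite [leRHS]mulrAC ler_pdivlMr ?mulr_gt0 ?subr_gt0 //.
have step_gap : 2 - L * g <= 2 - L * (th * g).
  by rewrite lerD2l lerN2 mulrCA ler_piMl // mulr_ge0 // ltW.
have coef_ge0 : 0 <= th * g * nu ^+ 2 * eta.
  by rewrite mulr_ge0 ?(ltW eta_gt0) // mulr_ge0 ?sqr_ge0 // ltW // mulr_gt0.
have := ler_wpM2l coef_ge0 step_gap; lra.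
Qed.

End ErrorFloor.

Section Cascade.

Variables (R : realType) (eta L nu D g0 theta : R).
Hypotheses (eta_gt0 : 0 < eta) (eta_le_L : eta <= L) (nu_gt0 : 0 < nu).

Lemma K_cond_ext (K1 K2 : nat -> nat) t :
  (forall j, (j < t)%N -> K1 j = K2 j) ->
  K_cond eta L nu D g0 theta K1 t = K_cond eta L nu D g0 theta K2 t.
Proof.
move=> K12; rewrite /K_cond; apply: funext => k /=.
by congr (_ < _ * _ * _); apply: eq_bigr => j _; rewrite K12.
Qed.

Lemma K_cond_bounded K t : admissible_step L (g0 * theta ^+ t) ->
  exists M, forall k, K_cond eta L nu D g0 theta K t k -> (k <= M)%N.
Proof.
move=> gt_adm; set q := qfun eta L (g0 * theta ^+ t).
have q_lt1 : `|q| < 1 by rewrite ger0_norm ?qfun_ge0 ?qfun_lt1.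
set C := 2%:R ^+ t * (\prod_(j < t) qfun eta L (g0 * theta ^+ j) ^+ K j) * D ^+ 2.
have [N qN] := geometric_eventually_lt C q_lt1 (error_floor_gt0 eta_gt0 nu_gt0 gt_adm).
exists N => k; rewrite /K_cond /= leqNgt; apply: contraTN => /ltnW /qN.
rewrite /C /error_floor !mulrA; lra.
Qed.

Lemma K_cond_cascade K t : admissible_step L (g0 * theta ^+ t) ->
  0 < theta -> theta <= 1 ->
  K_cond eta L nu D g0 theta K t (K t) -> K_cond eta L nu D g0 theta K t.+1 0.
Proof.
move=> gt_adm theta_gt0 theta_le1.
have floor_gt0 := error_floor_gt0 eta_gt0 nu_gt0 gt_adm.
have floor_next :
    error_floor eta L nu (g0 * theta ^+ t.+1) <= error_floor eta L nu (g0 * theta ^+ t).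
  have -> : g0 * theta ^+ t.+1 = theta * (g0 * theta ^+ t) by rewrite exprSr mulrA mulrC.
  apply: le_trans (error_floor_scale nu eta_gt0 eta_le_L gt_adm theta_gt0 theta_le1) _.
  by rewrite ler_piMl // ltW.
rewrite /K_cond /= big_ord_recr /= expr0 mul1r [2%:R ^+ t.+1]exprS.
move: floor_next floor_gt0; rewrite /error_floor.
set P := \prod_(j < t) _; set Q := qfun _ _ _ ^+ K t; lra.
Qed.

Lemma ell_cond_exists gamma : admissible_step L gamma -> 0 < D ->
  0 < theta -> theta < 1 -> exists j, ell_cond eta L nu D gamma theta j.
Proof.
move=> gamma_adm D_gt0 theta_gt0 theta_lt1.
have theta_norm_lt1 : `|theta| < 1 by rewrite gtr0_norm.
have [N thetaN] := geometric_eventually_lt (error_floor eta L nu gamma)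
  theta_norm_lt1 (exprn_gt0 2 D_gt0).
exists N; rewrite /ell_cond mulnC exprM -exprMn.
change (error_floor eta L nu (gamma * theta ^+ N) < D ^+ 2).
apply: le_lt_trans (thetaN N (leqnn N)).
rewrite [gamma * _]mulrC; apply: error_floor_scale => //; first exact: exprn_gt0.
by rewrite exprn_ile1 // ltW.
Qed.

Lemma K_cond0 gamma ell K : ell_cond eta L nu D gamma theta ell ->
  K_cond eta L nu D (gamma * theta ^+ ell) theta K 0 0.
Proof.
by rewrite /ell_cond /K_cond /= big_ord0 expr0 !mulr1 !mul1r exprMn -exprM mulnC.
Qed.

End Cascade.

Theorem proposition6 (R : realType) (n : nat)
    (Dom X : set 'rV[R]_n) (f : 'rV[R]_n -> R) (gradf : 'rV[R]_n -> 'rV[R]_n)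
    (L eta D nu gamma theta : R) :
  open Dom -> X `<=` Dom -> X !=set0 -> closed X -> convex_setv X -> compact X ->
  (forall x, X x -> differentiable f x /\ forall h, 'd f x h = dotv (gradf x) h) ->
  (forall x y, X x -> X y -> enorm (gradf x - gradf y) <= L * enorm (x - y)) ->
  0 < eta -> strongly_convex_on X f eta ->
  (forall x y, X x -> X y -> enorm (x - y) <= D) ->
  (exists x y, X x /\ X y /\ enorm (x - y) = D) ->
  0 < D ->
  0 < nu ->
  0 < gamma -> gamma < 2 / L ->
  0 < theta -> theta < 1 ->
  exists ell : nat,
    is_min_nat (ell_cond eta L nu D gamma theta) ell /\
    exists K : nat -> nat,
      forall t : nat,
        is_max_nat (K_cond eta L nu D (gamma * theta ^+ ell) theta K t) (K t).
Proof.
move=> _ _ _ _ _ _ f_grad gradf_lip eta_gt0 f_strong _ [x [y [Xx [Xy xyD]]]]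
  D_gt0 nu_gt0 gamma_gt0 gamma_lt theta_gt0 theta_lt1.
have L_gt0 : 0 < L.
  rewrite ltNge; apply/negP => L_le0.
  have : 2 / L <= 0 by rewrite pmulr_rle0 // invr_le0.
  lra.
have eta_le_L : eta <= L.
  by apply: (strong_convexity_le_lipschitz f_grad f_strong gradf_lip L_gt0 Xx Xy); rewrite xyD.
have gamma_adm : admissible_step L gamma by split=> //; rewrite mulrC -ltr_pdivlMr.
have [ell ell_min] : exists ell, is_min_nat (ell_cond eta L nu D gamma theta) ell.
  by apply/is_min_nat_exists/ell_cond_exists.
exists ell; split=> //.
have step_adm t : admissible_step L (gamma * theta ^+ ell * theta ^+ t).
  rewrite -mulrA -exprD mulrC.
  by apply: admissible_step_scale; rewrite ?exprn_gt0 ?exprn_ile1 ?ltW.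
apply: exists_recursive_max => [K1 K2 t|K t K_max]; first exact: K_cond_ext.
apply: is_max_nat_exists (K_cond_bounded D eta_gt0 eta_le_L nu_gt0 K (step_adm t)).
exists 0%N; case: t K_max => [|t] K_max; first exact: K_cond0 (proj1 ell_min).
apply: (K_cond_cascade eta_gt0 eta_le_L nu_gt0 (step_adm t) theta_gt0 (ltW theta_lt1)
  (proj1 (K_max t (ltnSn t)))).
Qed.
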